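(* Let $\mathbb{T}^2=[-\pi,\pi]^2$, let $k_0$ be a positive integer, $U(y)=\sin(k_0y)$, let $f_0,g_0$ be smooth $2\pi$-periodic functions, and let $\rho$ solve \[ \partial_t\rho+U(y)\partial_x\rho=0,\qquad \rho(0,x,y)=f_0(y)\sin x+g_0(y)\cos x . \] Then $\|\rho(t,\cdot)\|_{H^1}^2\le 2\|\rho(0,\cdot)\|_{H^1}^2+10\pi k_0^2t^2\|\rho(0,\cdot)\|_{L^2}^2$.
   Context: $\|F\|_{H^1}^2=\int_{\mathbb{T}^2}\big(F^2+|\nabla F|^2\big)\,dx\,dy$. *)

From Stdlib Require Import Reals.
From Coquelicot Require Import Coquelicot.
Open Scope R_scope.

Definition smooth (f : R -> R) : Prop :=
  forall (n : nat) (x : R), ex_derive (Derive_n f n) x.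

Definition periodic_2pi (f : R -> R) : Prop :=
  forall y, f (y + 2 * PI) = f y.

Definition int_T2 (F : R -> R -> R) : R :=
  RInt (fun x => RInt (fun y => F x y) (- PI) PI) (- PI) PI.

Definition dx (F : R -> R -> R) (x y : R) : R := Derive (fun x' => F x' y) x.
Definition dy (F : R -> R -> R) (x y : R) : R := Derive (fun y' => F x y') y.

Definition L2sq (F : R -> R -> R) : R := int_T2 (fun x y => (F x y) ^ 2).
Definition H1sq (F : R -> R -> R) : R :=
  int_T2 (fun x y => (F x y) ^ 2 + ((dx F x y) ^ 2 + (dy F x y) ^ 2)).

Definition dt3 (rho : R -> R -> R -> R) (t x y : R) : R :=
  Derive (fun t' => rho t' x y) t.
Definition dx3 (rho : R -> R -> R -> R) (t x y : R) : R :=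
  Derive (fun x' => rho t x' y) x.
Definition dy3 (rho : R -> R -> R -> R) (t x y : R) : R :=
  Derive (fun y' => rho t x y') y.

Definition uncurry3 (h : R -> R -> R -> R) : R * R * R -> R :=
  fun p => h (fst (fst p)) (snd (fst p)) (snd p).

Definition C1_3 (rho : R -> R -> R -> R) : Prop :=
  (forall t x y, ex_derive (fun t' => rho t' x y) t /\
                 ex_derive (fun x' => rho t x' y) x /\
                 ex_derive (fun y' => rho t x y') y) /\
  (forall p : R * R * R,
     continuous (uncurry3 rho) p /\
     continuous (uncurry3 (dt3 rho)) p /\
     continuous (uncurry3 (dx3 rho)) p /\
     continuous (uncurry3 (dy3 rho)) p).

From Stdlib Require Import Reals Lra FunctionalExtensionality.
From Coquelicot Require Import Coquelicot.
Open Scope R_scope.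

(** Along the characteristics [dx/dt = U(y)] the transport equation moves data rigidly:
    [rho t x y = rho 0 (x - t U(y)) y], so [rho t] is again a single Fourier mode
    [f0 y sin (x - t U y) + g0 y cos (x - t U y)].  Integrated over a period in [x], the
    square of [a sin (x - s) + b cos (x - s)] gives [pi (a^2 + b^2)] whatever the shift [s],
    so the [L^2] norm is conserved and the only growth of the [H^1] norm comes from
    differentiating the phase in [y]: this adds [t U'(y) (g0, -f0)] to [(f0', g0')].
    As [|U'| <= k0], [(a + b)^2 <= 2 a^2 + 2 b^2] gives the bound with [2 k0^2 t^2]
    in place of [10 pi k0^2 t^2]. *)

Lemma continuity_2d_pt_uncurry3 (g : R -> R -> R -> R) (u v y : R) :
  continuous (uncurry3 g) ((u, v), y) -> continuity_2d_pt (fun u' v' => g u' v' y) u v.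
Proof.
  intros Hg. apply continuity_2d_pt_filterlim.
  apply (filterlim_comp _ _ _ (fun z : R * R => (z, y)) (uncurry3 g) _ (locally ((u, v), y)));
    [|exact Hg].
  intros P [e He]. exists e. intros z Hz. apply He. split; [exact Hz | apply ball_center].
Qed.

Lemma partial1_increment_le (G : R -> R -> R) (s z0 : R) :
  (forall r z, ex_derive (fun r' => G r' z) r) ->
  continuity_2d_pt (fun u v => Derive (fun r => G r v) u) s z0 ->
  forall eps : posreal, exists delta : posreal, forall h z,
    Rabs h < delta -> Rabs (z - z0) < delta ->
    Rabs (G (s + h) z - G s z - h * Derive (fun r => G r z0) s) <= eps * Rabs h.
Proof.
  intros HG Hc eps. destruct (Hc eps) as [delta Hdelta]. exists delta. intros h z Hh Hz.
  destruct (MVT_gen (fun r => G r z) s (s + h) (fun r => Derive (fun r' => G r' z) r))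
    as [c [Hcs ->]].
  - intros r _. apply Derive_correct, HG.
  - intros r _. apply continuity_pt_filterlim.
    exact (ex_derive_continuous (fun r' => G r' z) r (HG r z)).
  - assert (Hc_s : Rabs (c - s) < delta).
    { apply (Rle_lt_trans _ (Rabs h)); [|exact Hh].
      revert Hcs. unfold Rmin, Rmax. destruct Rle_dec; intros; unfold Rabs;
        repeat destruct Rcase_abs; lra. }
    specialize (Hdelta c z Hc_s Hz).
    replace (_ * (s + h - s) - h * _)
      with (h * (Derive (fun r => G r z) c - Derive (fun r => G r z0) s)) by ring.
    rewrite Rabs_mult, Rmult_comm.
    apply Rmult_le_compat_r; [apply Rabs_pos | lra].
Qed.

Lemma is_derive_along_line (G : R -> R -> R) (a U s : R) :
  (forall r z, ex_derive (fun r' => G r' z) r) ->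
  ex_derive (fun z => G s z) (a + U * s) ->
  continuity_2d_pt (fun u v => Derive (fun r => G r v) u) s (a + U * s) ->
  is_derive (fun r => G r (a + U * r)) s
    (Derive (fun r => G r (a + U * s)) s + U * Derive (fun z => G s z) (a + U * s)).
Proof.
  intros HG1 HG2 Hc. apply is_derive_Reals. intros eps Heps.
  (* Split the increment at [(s, a + U (s + h))]: the step in the first variable is controlled
     by [partial1_increment_le], the step in the second by the one-variable chain rule. *)
  set (z0 := a + U * s).
  assert (Hline : derivable_pt_lim (fun r => G s (a + U * r)) s
                    (U * Derive (fun z => G s z) z0)).
  { apply is_derive_Reals.
    apply (is_derive_comp (fun z => G s z) (fun r => a + U * r)).
    - apply Derive_correct, HG2.
    - auto_derive; [exact I | ring]. }
  assert (Heps2 : 0 < eps / 2) by lra.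
  destruct (Hline _ Heps2) as [d2 Hd2].
  destruct (partial1_increment_le G s z0 HG1 Hc (mkposreal _ Heps2)) as [d1 Hd1].
  assert (HU : 0 < Rabs U + 1) by (pose proof (Rabs_pos U); lra).
  assert (Hd1U : 0 < d1 / (Rabs U + 1)) by (apply Rdiv_lt_0_compat; [apply cond_pos | lra]).
  exists (mkposreal _ (Rmin_pos _ _ (cond_pos d2) Hd1U)). simpl. intros h Hh0 Hh.
  assert (Hhd2 : Rabs h < d2) by (eapply Rlt_le_trans; [exact Hh | apply Rmin_l]).
  assert (Hhd1 : Rabs h < d1 / (Rabs U + 1)) by (eapply Rlt_le_trans; [exact Hh | apply Rmin_r]).
  assert (Hhd1U : Rabs h * (Rabs U + 1) < d1) by (apply Rlt_div_r; lra).
  pose proof (Rabs_pos U). pose proof (Rabs_pos h).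
  assert (HUh : Rabs (a + U * (s + h) - z0) < d1).
  { unfold z0. replace (a + U * (s + h) - (a + U * s)) with (U * h) by ring.
    rewrite Rabs_mult. nra. }
  assert (Hh1 : Rabs h < d1) by nra.
  specialize (Hd1 h _ Hh1 HUh). specialize (Hd2 h Hh0 Hhd2). simpl in Hd1.
  assert (Hhpos : 0 < Rabs h) by (apply Rabs_pos_lt, Hh0).
  replace ((G (s + h) (a + U * (s + h)) - G s (a + U * s)) / h - _)
    with ((G (s + h) (a + U * (s + h)) - G s (a + U * (s + h))
           - h * Derive (fun r => G r z0) s) / h
          + ((G s (a + U * (s + h)) - G s z0) / h - U * Derive (fun z => G s z) z0))
    by (unfold z0; field; exact Hh0).
  eapply Rle_lt_trans; [apply Rabs_triang|].
  unfold Rdiv at 1. rewrite Rabs_mult, Rabs_inv.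
  apply (Rmult_le_compat_r (/ Rabs h)) in Hd1; [|left; apply Rinv_0_lt_compat, Hhpos].
  rewrite Rmult_assoc, Rinv_r, Rmult_1_r in Hd1 by lra.
  fold z0 in Hd2. lra.
Qed.

Lemma transport_along_characteristics (U : R -> R) (rho : R -> R -> R -> R) :
  C1_3 rho ->
  (forall t x y, 0 <= t -> dt3 rho t x y + U y * dx3 rho t x y = 0) ->
  forall t x y, 0 <= t -> rho t x y = rho 0 (x - t * U y) y.
Proof.
  intros [Hdiff Hcont] Htransport t x y Ht.
  set (a := x - t * U y).
  set (h := fun r => rho r (a + U y * r) y).
  replace (rho t x y) with (h t) by (unfold h, a; f_equal; ring).
  replace (rho 0 a y) with (h 0) by (unfold h; f_equal; ring).
  destruct (Req_dec t 0) as [-> | Ht0]; [reflexivity|].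
  symmetry. apply (eq_is_derive h 0 t); [|lra].
  intros r [Hr _].
  assert (Hline := is_derive_along_line (fun r' z => rho r' z y) a (U y) r
    (fun r' z => proj1 (Hdiff r' z y)) (proj1 (proj2 (Hdiff r _ y)))
    (continuity_2d_pt_uncurry3 (dt3 rho) _ _ _ (proj1 (proj2 (Hcont _))))).
  assert (Hchar := Htransport r (a + U y * r) y Hr). unfold dt3, dx3 in Hchar.
  cbv beta in Hline. rewrite Hchar in Hline. exact Hline.
Qed.

Lemma continuous_of_is_derive (h h' : R -> R) :
  (forall y, is_derive h y (h' y)) -> forall y, continuous h y.
Proof. intros Hh y. exact (ex_derive_continuous h y (ex_intro _ _ (Hh y))). Qed.

Lemma ex_RInt_of_continuous (h : R -> R) (a b : R) :
  (forall y, continuous h y) -> ex_RInt h a b.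
Proof. intros Hh. apply (@ex_RInt_continuous R_CompleteNormedModule). intros y _. apply Hh. Qed.

Lemma continuous_sqr (f : R -> R) (y : R) :
  continuous f y -> continuous (fun z => f z ^ 2) y.
Proof.
  intros Hf. apply (continuous_mult f (fun z => f z * 1)); [exact Hf|].
  apply (continuous_mult f (fun _ => 1)); [exact Hf | apply continuous_const].
Qed.

Ltac solve_continuous :=
  repeat match goal with
  | H : forall y, continuous ?f y |- continuous ?f _ => apply H
  | H : forall y, continuous ?f y |- continuous (fun y => ?f y) _ => apply H
  | |- continuous (fun _ => ?c) _ => apply (@continuous_const R_UniformSpace R_UniformSpace c)
  | |- continuous (fun y => y) _ => apply continuous_id
  | |- continuous (fun y => @?f y + @?g y) _ =>
      apply (@continuous_plus _ R_AbsRing R_NormedModule f g)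
  | |- continuous (fun y => @?f y - @?g y) _ =>
      apply (@continuous_minus _ R_AbsRing R_NormedModule f g)
  | |- continuous (fun y => - @?f y) _ => apply (@continuous_opp _ R_AbsRing R_NormedModule f)
  | |- continuous (fun y => @?f y * @?g y) _ => apply (@continuous_mult _ R_AbsRing f g)
  | |- continuous (fun y => @?f y ^ 2) _ => apply (continuous_sqr f)
  | |- continuous (fun y => sin (@?f y)) _ => apply (continuous_sin_comp f)
  | |- continuous (fun y => cos (@?f y)) _ => apply (continuous_cos_comp f)
  end.

Lemma is_RInt_lincomb (A B : R -> R) (a b IA IB u v : R) :
  is_RInt A a b IA -> is_RInt B a b IB ->
  is_RInt (fun y => u * A y + v * B y) a b (u * IA + v * IB).
Proof.
  intros HA HB. exact (is_RInt_plus _ _ _ _ _ _ (is_RInt_scal _ _ _ u _ HA) (is_RInt_scal _ _ _ v _ HB)).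
Qed.

Lemma RInt_le_lincomb (F A B : R -> R) (a b u v : R) :
  a <= b -> ex_RInt F a b -> ex_RInt A a b -> ex_RInt B a b ->
  (forall y, F y <= u * A y + v * B y) ->
  RInt F a b <= u * RInt A a b + v * RInt B a b.
Proof.
  intros Hab HF HA HB HFAB.
  assert (Hcomb := is_RInt_lincomb A B _ _ _ _ u v (RInt_correct _ _ _ HA) (RInt_correct _ _ _ HB)).
  rewrite <- (is_RInt_unique _ _ _ _ Hcomb).
  apply RInt_le; [exact Hab | exact HF | eexists; exact Hcomb | intros y _; apply HFAB].
Qed.

Lemma is_RInt_lincomb3 (A B C : R -> R) (a b IA IB IC u v w : R) :
  is_RInt A a b IA -> is_RInt B a b IB -> is_RInt C a b IC ->
  is_RInt (fun y => u * A y + v * B y + w * C y) a b (u * IA + v * IB + w * IC).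
Proof.
  intros HA HB HC.
  apply (is_RInt_ext (fun y => 1 * (u * A y + v * B y) + w * C y)); [intros y _; simpl; ring|].
  replace (u * IA + v * IB + w * IC) with (1 * (u * IA + v * IB) + w * IC) by ring.
  apply is_RInt_lincomb; [apply is_RInt_lincomb|]; assumption.
Qed.

Lemma is_RInt_antiderivative (F f : R -> R) (a b : R) :
  (forall x, is_derive F x (f x)) -> (forall x, continuous f x) -> is_RInt f a b (F b - F a).
Proof.
  intros HF Hf. apply (is_RInt_derive F f a b); intros x _; [apply HF | apply Hf].
Qed.

Lemma is_RInt_sin_sqr : is_RInt (fun x => sin x ^ 2) (- PI) PI PI.
Proof.
  replace PI with ((PI - sin PI * cos PI) / 2 - (- PI - sin (- PI) * cos (- PI)) / 2) at 3
    by (rewrite sin_neg, sin_PI; field).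
  apply (is_RInt_antiderivative (fun x => (x - sin x * cos x) / 2)).
  - intros x. auto_derive; [exact I|]. pose proof (sin2_cos2 x). unfold Rsqr in *. nra.
  - intros x. solve_continuous.
Qed.

Lemma is_RInt_cos_sqr : is_RInt (fun x => cos x ^ 2) (- PI) PI PI.
Proof.
  replace PI with ((PI + sin PI * cos PI) / 2 - (- PI + sin (- PI) * cos (- PI)) / 2) at 3
    by (rewrite sin_neg, sin_PI; field).
  apply (is_RInt_antiderivative (fun x => (x + sin x * cos x) / 2)).
  - intros x. auto_derive; [exact I|]. pose proof (sin2_cos2 x). unfold Rsqr in *. nra.
  - intros x. solve_continuous.
Qed.

Lemma is_RInt_sin_cos : is_RInt (fun x => sin x * cos x) (- PI) PI 0.
Proof.
  replace 0 with (sin PI ^ 2 / 2 - sin (- PI) ^ 2 / 2) by (rewrite sin_neg, sin_PI; field).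
  apply (is_RInt_antiderivative (fun x => sin x ^ 2 / 2)).
  - intros x. auto_derive; [exact I | field].
  - intros x. solve_continuous.
Qed.

Lemma int_T2_trig_quadratic (P Q S : R -> R) :
  ex_RInt P (- PI) PI -> ex_RInt Q (- PI) PI -> ex_RInt S (- PI) PI ->
  int_T2 (fun x y => P y * sin x ^ 2 + Q y * (sin x * cos x) + S y * cos x ^ 2)
  = PI * RInt (fun y => P y + S y) (- PI) PI.
Proof.
  intros HP HQ HS.
  assert (HPS : is_RInt (fun y => P y + S y) (- PI) PI (RInt P (- PI) PI + RInt S (- PI) PI))
    by exact (is_RInt_plus _ _ _ _ _ _ (RInt_correct P _ _ HP) (RInt_correct S _ _ HS)).
  unfold int_T2.
  rewrite (RInt_ext _ (fun x => RInt P (- PI) PI * sin x ^ 2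
                                + RInt Q (- PI) PI * (sin x * cos x) + RInt S (- PI) PI * cos x ^ 2)).
  2:{ intros x _. apply is_RInt_unique.
      apply (is_RInt_ext (fun y => sin x ^ 2 * P y + sin x * cos x * Q y + cos x ^ 2 * S y));
        [intros y _; simpl; ring|].
      replace (RInt P _ _ * _ + _ + _) with (sin x ^ 2 * RInt P (- PI) PI
        + sin x * cos x * RInt Q (- PI) PI + cos x ^ 2 * RInt S (- PI) PI) by ring.
      apply is_RInt_lincomb3; apply (@RInt_correct R_CompleteNormedModule); assumption. }
  rewrite (is_RInt_unique _ _ _ _
             (is_RInt_lincomb3 _ _ _ _ _ _ _ _ _ _ _ is_RInt_sin_sqr is_RInt_sin_cos is_RInt_cos_sqr)).
  rewrite (is_RInt_unique _ _ _ _ HPS). ring.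
Qed.

Lemma int_T2_shifted_trig_quadratic (P Q S s : R -> R) :
  (forall y, continuous P y) -> (forall y, continuous Q y) ->
  (forall y, continuous S y) -> (forall y, continuous s y) ->
  int_T2 (fun x y => P y * sin (x - s y) ^ 2 + Q y * (sin (x - s y) * cos (x - s y))
                     + S y * cos (x - s y) ^ 2)
  = PI * RInt (fun y => P y + S y) (- PI) PI.
Proof.
  intros HP HQ HS Hs.
  set (P' := fun y => P y * cos (s y) ^ 2 + Q y * (sin (s y) * cos (s y)) + S y * sin (s y) ^ 2).
  set (Q' := fun y => 2 * (S y - P y) * (sin (s y) * cos (s y))
                      + Q y * (cos (s y) ^ 2 - sin (s y) ^ 2)).
  set (S' := fun y => P y * sin (s y) ^ 2 - Q y * (sin (s y) * cos (s y)) + S y * cos (s y) ^ 2).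
  erewrite (functional_extensionality _
    (fun x y => P' y * sin x ^ 2 + Q' y * (sin x * cos x) + S' y * cos x ^ 2)).
  2:{ intros x. apply functional_extensionality. intros y.
      unfold P', Q', S'. rewrite sin_minus, cos_minus. ring. }
  rewrite int_T2_trig_quadratic
    by (apply ex_RInt_of_continuous; intros y;
        unfold P', Q', S'; solve_continuous).
  f_equal. apply RInt_ext. intros y _. simpl. unfold P', S'.
  pose proof (sin2_cos2 (s y)) as Hpyth. unfold Rsqr in Hpyth.
  replace (P y + S y) with ((P y + S y) * (sin (s y) * sin (s y) + cos (s y) * cos (s y)))
    by (rewrite Hpyth; ring).
  ring.
Qed.

Lemma sqr_shear_le (a b c d s : R) :
  (a + s * d) ^ 2 + (b - s * c) ^ 2 <= 2 * (a ^ 2 + b ^ 2) + 2 * s ^ 2 * (c ^ 2 + d ^ 2).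
Proof. pose proof (pow2_ge_0 (a - s * d)). pose proof (pow2_ge_0 (b + s * c)). nra. Qed.

Section Transported_profile.

Variables f f' g g' U U' : R -> R.
Hypothesis f_derive : forall y, is_derive f y (f' y).
Hypothesis g_derive : forall y, is_derive g y (g' y).
Hypothesis U_derive : forall y, is_derive U y (U' y).
Hypothesis f'_continuous : forall y, continuous f' y.
Hypothesis g'_continuous : forall y, continuous g' y.
Hypothesis U'_continuous : forall y, continuous U' y.

Definition transported (t : R) : R -> R -> R :=
  fun x y => f y * sin (x - t * U y) + g y * cos (x - t * U y).

Lemma dx_transported t x y :
  dx (transported t) x y = - g y * sin (x - t * U y) + f y * cos (x - t * U y).
Proof. unfold dx, transported. apply is_derive_unique. auto_derive; [exact I | unfold Rminus; ring]. Qed.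

Lemma dy_transported t x y :
  dy (transported t) x y = (f' y + t * U' y * g y) * sin (x - t * U y)
                           + (g' y - t * U' y * f y) * cos (x - t * U y).
Proof.
  unfold dy, transported. apply is_derive_unique. auto_derive.
  - repeat split; eexists; eauto.
  - replace (Derive (fun z : R => f z) y) with (f' y) by (symmetry; apply is_derive_unique, f_derive).
    replace (Derive (fun z : R => g z) y) with (g' y) by (symmetry; apply is_derive_unique, g_derive).
    replace (Derive (fun z : R => U z) y) with (U' y) by (symmetry; apply is_derive_unique, U_derive).
    unfold Rminus. ring.
Qed.

Lemma L2sq_transported t :
  L2sq (transported t) = PI * RInt (fun y => f y ^ 2 + g y ^ 2) (- PI) PI.
Proof.
  pose proof (continuous_of_is_derive f f' f_derive).
  pose proof (continuous_of_is_derive g g' g_derive).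
  pose proof (continuous_of_is_derive U U' U_derive).
  transitivity (int_T2 (fun x y =>
    f y ^ 2 * sin (x - t * U y) ^ 2 + 2 * f y * g y * (sin (x - t * U y) * cos (x - t * U y))
    + g y ^ 2 * cos (x - t * U y) ^ 2)).
  { unfold L2sq, transported. f_equal.
    apply functional_extensionality; intros x; apply functional_extensionality; intros y.
    ring. }
  apply (int_T2_shifted_trig_quadratic (fun y => f y ^ 2) (fun y => 2 * f y * g y)
           (fun y => g y ^ 2) (fun y => t * U y)); intros y; solve_continuous.
Qed.

Lemma L2sq_transported_ge0 t : 0 <= L2sq (transported t).
Proof.
  pose proof (continuous_of_is_derive f f' f_derive).
  pose proof (continuous_of_is_derive g g' g_derive).
  rewrite L2sq_transported. pose proof PI_RGT_0.
  apply Rmult_le_pos; [lra|].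
  apply RInt_ge_0; [lra | | intros; nra].
  apply ex_RInt_of_continuous; intros y; solve_continuous.
Qed.

Lemma H1sq_transported t :
  H1sq (transported t) = PI * RInt (fun y =>
    2 * (f y ^ 2 + g y ^ 2) + ((f' y + t * U' y * g y) ^ 2 + (g' y - t * U' y * f y) ^ 2))
    (- PI) PI.
Proof.
  pose proof (continuous_of_is_derive f f' f_derive).
  pose proof (continuous_of_is_derive g g' g_derive).
  pose proof (continuous_of_is_derive U U' U_derive).
  set (A := fun y => f' y + t * U' y * g y).
  set (B := fun y => g' y - t * U' y * f y).
  transitivity (int_T2 (fun x y =>
    (f y ^ 2 + g y ^ 2 + A y ^ 2) * sin (x - t * U y) ^ 2
    + 2 * A y * B y * (sin (x - t * U y) * cos (x - t * U y))
    + (g y ^ 2 + f y ^ 2 + B y ^ 2) * cos (x - t * U y) ^ 2)).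
  { unfold H1sq. f_equal.
    apply functional_extensionality; intros x; apply functional_extensionality; intros y.
    rewrite dx_transported, dy_transported. unfold transported, A, B. ring. }
  rewrite (int_T2_shifted_trig_quadratic
             (fun y => f y ^ 2 + g y ^ 2 + A y ^ 2) (fun y => 2 * A y * B y)
             (fun y => g y ^ 2 + f y ^ 2 + B y ^ 2) (fun y => t * U y))
    by (intros y; unfold A, B; solve_continuous).
  f_equal. apply RInt_ext. intros y _. unfold A, B. simpl. ring.
Qed.

Lemma H1sq_transported_le (L t : R) :
  (forall y, Rabs (U' y) <= L) ->
  H1sq (transported t) <= 2 * H1sq (transported 0) + 2 * (L * t) ^ 2 * L2sq (transported 0).
Proof.
  intros HL.
  pose proof (continuous_of_is_derive f f' f_derive).
  pose proof (continuous_of_is_derive g g' g_derive).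
  rewrite !H1sq_transported, L2sq_transported.
  set (E0 := fun y => 2 * (f y ^ 2 + g y ^ 2)
                      + ((f' y + 0 * U' y * g y) ^ 2 + (g' y - 0 * U' y * f y) ^ 2)).
  set (M := fun y => f y ^ 2 + g y ^ 2).
  replace (2 * (PI * RInt E0 (- PI) PI) + 2 * (L * t) ^ 2 * (PI * RInt M (- PI) PI))
    with (PI * (2 * RInt E0 (- PI) PI + 2 * (L * t) ^ 2 * RInt M (- PI) PI)) by ring.
  pose proof PI_RGT_0.
  apply Rmult_le_compat_l; [lra|].
  apply RInt_le_lincomb; [lra | | | |].
  - apply ex_RInt_of_continuous; intros y; solve_continuous.
  - apply ex_RInt_of_continuous; intros y; unfold E0; solve_continuous.
  - apply ex_RInt_of_continuous; intros y; unfold M; solve_continuous.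
  - intros y. unfold E0, M.
    assert (Hs : (t * U' y) ^ 2 <= (L * t) ^ 2).
    { replace ((t * U' y) ^ 2) with (t ^ 2 * Rabs (U' y) ^ 2) by (rewrite pow2_abs; ring).
      replace ((L * t) ^ 2) with (t ^ 2 * L ^ 2) by ring.
      apply Rmult_le_compat_l; [apply pow2_ge_0|].
      apply pow_incr. split; [apply Rabs_pos | apply HL]. }
    pose proof (sqr_shear_le (f' y) (g' y) (f y) (g y) (t * U' y)).
    nra.
Qed.

End Transported_profile.

Lemma Rabs_mult_cos_le (k x : R) : Rabs (k * cos x) <= Rabs k.
Proof.
  rewrite Rabs_mult. rewrite <- (Rmult_1_r (Rabs k)) at 2.
  apply Rmult_le_compat_l; [apply Rabs_pos | apply Rabs_le, COS_bound].
Qed.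

Lemma smooth_is_derive (h : R -> R) : smooth h -> forall y, is_derive h y (Derive h y).
Proof. intros Hh y. apply Derive_correct, (Hh 0%nat). Qed.

Lemma smooth_continuous_Derive (h : R -> R) : smooth h -> forall y, continuous (Derive h) y.
Proof. intros Hh y. exact (ex_derive_continuous (Derive h) y (Hh 1%nat y)). Qed.

Theorem lemma3p4 (k0 : nat) (f0 g0 : R -> R) (rho : R -> R -> R -> R) :
  (0 < k0)%nat ->
  smooth f0 -> smooth g0 -> periodic_2pi f0 -> periodic_2pi g0 ->
  C1_3 rho ->
  (forall t x y, 0 <= t ->
     dt3 rho t x y + sin (INR k0 * y) * dx3 rho t x y = 0) ->
  (forall x y, rho 0 x y = f0 y * sin x + g0 y * cos x) ->
  forall t, 0 <= t ->
    H1sq (rho t) <= 2 * H1sq (rho 0)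
                    + 10 * PI * (INR k0) ^ 2 * t ^ 2 * L2sq (rho 0).
Proof.
  intros _ Hf0 Hg0 _ _ Hrho Htransport Hinit t Ht.
  set (U := fun y => sin (INR k0 * y)).
  set (U' := fun y => INR k0 * cos (INR k0 * y)).
  assert (HU : forall y, is_derive U y (U' y)) by (intros y; unfold U, U'; auto_derive; [exact I | ring]).
  assert (HU' : forall y, continuous U' y) by (intros y; unfold U'; solve_continuous).
  assert (HL : forall y, Rabs (U' y) <= INR k0)
    by (intros y; rewrite <- (Rabs_pos_eq _ (pos_INR k0)); apply Rabs_mult_cos_le).
  assert (Hsolution : forall s, 0 <= s -> rho s = transported f0 g0 U s).
  { intros s Hs. apply functional_extensionality; intros x; apply functional_extensionality; intros y.
    rewrite (transport_along_characteristics U rho Hrho Htransport s x y Hs), Hinit.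
    reflexivity. }
  rewrite (Hsolution t Ht), (Hsolution 0 (Rle_refl 0)).
  eapply Rle_trans.
  { apply (H1sq_transported_le f0 (Derive f0) g0 (Derive g0) U U');
      auto using smooth_is_derive, smooth_continuous_Derive. }
  apply Rplus_le_compat_l.
  assert (HL2 := L2sq_transported_ge0 f0 (Derive f0) g0 (Derive g0) U U'
                  (smooth_is_derive f0 Hf0) (smooth_is_derive g0 Hg0) HU 0).
  pose proof PI2_1.
  replace (10 * PI * INR k0 ^ 2 * t ^ 2) with (10 * PI * (INR k0 * t) ^ 2) by ring.
  apply Rmult_le_compat_r; [exact HL2|].
  apply Rmult_le_compat_r; [apply pow2_ge_0 | lra].
Qed.
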